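(* Let $d\in\{0,1,\dots,S\}$ and let $\bar\xi_d$ be the uniform design on $\mathcal{X}^{(S)}_d$. Then its information matrix is block diagonal, $$\mathbf{M}(\bar\xi_d)=\begin{pmatrix} h_1(d)\,\mathbf{Id}_{K}\otimes\mathbf{M} & \mathbf{0} & \mathbf{0}\\ \mathbf{0} & h_2(d)\,\mathbf{Id}_{\binom K2}\otimes\mathbf{M}\otimes\mathbf{M} & \mathbf{0}\\ \mathbf{0} & \mathbf{0} & h_3(d)\,\mathbf{Id}_{\binom K3}\otimes\mathbf{M}\otimes\mathbf{M}\otimes\mathbf{M}\end{pmatrix},$$ where the three diagonal blocks correspond to the main-effect, first-order-interaction and second-order-interaction components of $\mathbf{f}$, and $$h_1(d)=\frac{d}{K},\qquad h_2(d)=\frac{d}{2vK(K-1)}\,(2Sv-2S-dv-v+2),\qquad h_3(d)=\frac{d\,\lambda(d)}{4v^2K(K-1)(K-2)},$$ with $$\lambda(d)=3S^2+3S^2v^2-6S^2v-3Sdv^2+3Sdv-6Sv^2+15Sv-9S+d^2v^2+3dv^2-6dv+2v^2-6v+6 .$$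
   Context: Fix integers $v\ge 2$, $K\ge 3$ and $S$ with $3\le S\le K$. Let $\mathbf{e}_i$ denote the $i$th unit vector of $\mathbb{R}^{v-1}$ and $\mathbf{1}_{v-1}$ the all-ones vector. Define $\mathbf{f}_1:\{0,1,\dots,v\}\to\mathbb{R}^{v-1}$ by $\mathbf{f}_1(i)=\mathbf{e}_i$ for $1\le i\le v-1$, $\mathbf{f}_1(v)=-\mathbf{1}_{v-1}$, $\mathbf{f}_1(0)=\mathbf{0}$. For $\mathbf{i}=(i_1,\dots,i_K)\in\{0,\dots,v\}^K$ let $\mathbf{f}(\mathbf{i})\in\mathbb{R}^p$ be the vector obtained by stacking the vectors $\mathbf{f}_1(i_k)$ ($k=1,\dots,K$), then $\mathbf{f}_1(i_k)\otimes\mathbf{f}_1(i_\ell)$ ($k<\ell$, lexicographic order), then $\mathbf{f}_1(i_k)\otimes\mathbf{f}_1(i_\ell)\otimes\mathbf{f}_1(i_m)$ ($k<\ell<m$, lexicographic order); here $\otimes$ is the Kronecker product and $p=p_1+p_2+p_3$ with $p_1=K(v-1)$, $p_2=\binom K2(v-1)^2$, $p_3=\binom K3(v-1)^3$. The design region $\mathcal{X}^{(S)}$ is the set of ordered pairs $(\mathbf{i},\mathbf{j})$ with $\mathbf{i},\mathbf{j}\in\{0,\dots,v\}^K$ for which there is a set $A$ of exactly $S$ attributes with $i_k,j_k\in\{1,\dots,v\}$ for $k\in A$ and $i_k=j_k=0$ for $k\notin A$. For $d\in\{0,\dots,S\}$, $\mathcal{X}^{(S)}_d$ is the set of pairs in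 $\mathcal{X}^{(S)}$ with $i_k\ne j_k$ for exactly $d$ indices $k$ (the comparison depth). An approximate design $\xi$ is a finitely supported probability measure on $\mathcal{X}^{(S)}$, with information matrix $\mathbf{M}(\xi)=\sum_{(\mathbf{i},\mathbf{j})}\xi(\mathbf{i},\mathbf{j})(\mathbf{f}(\mathbf{i})-\mathbf{f}(\mathbf{j}))(\mathbf{f}(\mathbf{i})-\mathbf{f}(\mathbf{j}))^\top$. The design $\bar\xi_d$ assigns weight $1/|\mathcal{X}^{(S)}_d|$ to each pair of $\mathcal{X}^{(S)}_d$ and $0$ elsewhere. Finally $\mathbf{M}=\frac{2}{v-1}(\mathbf{Id}_{v-1}+\mathbf{1}_{v-1}\mathbf{1}_{v-1}^\top)$. *)

From HB Require Import structures.
From mathcomp Require Import all_boot all_order all_algebra.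
Set Implicit Arguments. Unset Strict Implicit. Unset Printing Implicit Defensive.
Import Order.TTheory GRing.Theory Num.Theory.
Local Open Scope ring_scope.

Definition profile (K v : nat) := {ffun 'I_K -> 'I_v.+1}.

(* f_1(i) in R^(v-1), coordinate a (0-based, a < v-1):
   f_1(0) = 0, f_1(i) = e_i (1 <= i <= v-1), f_1(v) = -1. *)
Definition f1 {R : numFieldType} (v : nat) (i : 'I_v.+1) (a : 'I_v.-1) : R :=
  if (i : nat) == v then -1
  else if (i : nat) == a.+1 then 1 else 0.

Definition pair_idx (K : nat) := {x : 'I_K * 'I_K | (x.1 < x.2)%N}.
Definition trip_idx (K : nat) :=
  {x : 'I_K * 'I_K * 'I_K | (x.1.1 < x.1.2)%N && (x.1.2 < x.2)%N}.

(* Coordinates of f(i) in R^p, p = p1 + p2 + p3: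
   main effects (k, a), two-factor ((k,l), a, b), three-factor ((k,l,m), a, b, c);
   the Kronecker coordinate (a,b[,c]) carries f1(i_k)_a f1(i_l)_b [f1(i_m)_c]. *)
Definition fcoord (K v : nat) : finType :=
  (('I_K * 'I_v.-1) + (pair_idx K * 'I_v.-1 * 'I_v.-1)
   + (trip_idx K * 'I_v.-1 * 'I_v.-1 * 'I_v.-1))%type.

Definition fvec {R : numFieldType} (K v : nat) (i : profile K v) (c : fcoord K v) : R :=
  match c with
  | inl (inl (k, a)) => f1 (i k) a
  | inl (inr (kl, a, b)) => f1 (i (val kl).1) a * f1 (i (val kl).2) b
  | inr (klm, a, b, e) =>
      f1 (i (val klm).1.1) a * f1 (i (val klm).1.2) b * f1 (i (val klm).2) e
  end.

Definition in_XS (K v S : nat) (x : profile K v * profile K v) : bool :=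
  [exists A : {set 'I_K}, (#|A| == S) &&
     [forall k, if k \in A then (x.1 k != ord0) && (x.2 k != ord0)
                else (x.1 k == ord0) && (x.2 k == ord0)]].

Definition in_XSd (K v S d : nat) (x : profile K v * profile K v) : bool :=
  in_XS S x && (#|[set k | x.1 k != x.2 k]| == d).

Definition design (R : numFieldType) (K v : nat) := {ffun profile K v * profile K v -> R}.

Definition infoM {R : numFieldType} (K v : nat) (xi : design R K v)
  (c c' : fcoord K v) : R :=
  \sum_(x : profile K v * profile K v)
    xi x * ((fvec x.1 c - fvec x.2 c) * (fvec x.1 c' - fvec x.2 c')).

Definition xibar (R : numFieldType) (K v S d : nat) : design R K v :=
  [ffun x : profile K v * profile K v =>
     if in_XSd S d x then (#|[pred y : profile K v * profile K v | in_XSd S d y]|%:R)^-1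
     else 0].

Definition Mm {R : numFieldType} (v : nat) (a a' : 'I_v.-1) : R :=
  2 / (v.-1)%:R * ((a == a')%:R + 1).

Definition h1 {R : numFieldType} (K v S d : nat) : R := d%:R / K%:R.
Definition h2 {R : numFieldType} (K v S d : nat) : R :=
  d%:R / (2 * v%:R * K%:R * (K%:R - 1)) *
  (2 * S%:R * v%:R - 2 * S%:R - d%:R * v%:R - v%:R + 2).
Definition lambda {R : numFieldType} (v S d : nat) : R :=
  let S := (S%:R : R) in let v := (v%:R : R) in let d := (d%:R : R) in
  3 * S ^+ 2 + 3 * S ^+ 2 * v ^+ 2 - 6 * S ^+ 2 * v - 3 * S * d * v ^+ 2
  + 3 * S * d * v - 6 * S * v ^+ 2 + 15 * S * v - 9 * S + d ^+ 2 * v ^+ 2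
  + 3 * d * v ^+ 2 - 6 * d * v + 2 * v ^+ 2 - 6 * v + 6.
Definition h3 {R : numFieldType} (K v S d : nat) : R :=
  d%:R * lambda v S d /
  (4 * v%:R ^+ 2 * K%:R * (K%:R - 1) * (K%:R - 2)).

Definition blockM {R : numFieldType} (K v S d : nat) (c c' : fcoord K v) : R :=
  match c, c' with
  | inl (inl (k, a)), inl (inl (k', a')) =>
      h1 K v S d * ((k == k')%:R * Mm a a')
  | inl (inr (kl, a, b)), inl (inr (kl', a', b')) =>
      h2 K v S d * ((kl == kl')%:R * Mm a a' * Mm b b')
  | inr (klm, a, b, e), inr (klm', a', b', e') =>
      h3 K v S d * ((klm == klm')%:R * Mm a a' * Mm b b' * Mm e e')
  | _, _ => 0
  end.

(* For a pair (i, j) of profiles, the level pair (i_k, j_k) of attribute k is idle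
   (0,0), a tie (a,a), a contrast (a,b) with a <> b, or invalid (exactly one zero);
   X^(S)_d consists of the pairs without invalid attribute, with S active attributes
   and d contrasts. Summing over X^(S)_d one attribute at a time, a factor G(i_k, j_k)
   only contributes its sums over the four kinds of level pairs, times sums over
   smaller regions of the same shape.
   The nonzero levels f_1(1), ..., f_1(v) sum to zero, so these kind sums vanish for
   G = f_1(i_k) and G = f_1(j_k): an entry whose two coordinates involve different
   sets of attributes is zero. For second moments, sum_(a=1..v) f_1(a) f_1(a)^T =
   Id + 1 1^T = (v-1)/2 M; a tie contributes this matrix and a contrast v-1 times it (both
   factors taken at the same profile) or -1 times it (at different profiles). The
   remaining weighted counts are ratios of |X^(S)_d| = C(K,S) C(S,d) v^(S-d)
   (v(v-1))^d, and give h_1, h_2, h_3. *)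

From HB Require Import structures.
From mathcomp Require Import all_boot all_order all_algebra.
From mathcomp Require Import ring zify.
Set Implicit Arguments. Unset Strict Implicit. Unset Printing Implicit Defensive.
Import Order.TTheory GRing.Theory Num.Theory.
Local Open Scope ring_scope.

Notation pair_prof K v := (profile K v * profile K v)%type.
Notation level_pair v := ('I_v.+1 * 'I_v.+1)%type.

Section States.
Variables K v : nat.

Definition state (x : pair_prof K v) (k : 'I_K) : level_pair v := (x.1 k, x.2 k).

Definition set_state (x : pair_prof K v) (k : 'I_K) (σ : level_pair v) : pair_prof K v :=
  ([ffun j => if j == k then σ.1 else x.1 j], [ffun j => if j == k then σ.2 else x.2 j]).

Lemma state_set x k σ j : state (set_state x k σ) j = if j == k then σ else state x j.
Proof. by rewrite /state !ffunE; case: (j == k); rewrite -?surjective_pairing. Qed.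

Lemma set_state_id x k : set_state x k (state x k) = x.
Proof.
by case: x => i j; congr (_, _); apply/ffunP => l; rewrite ffunE; case: eqP => // ->.
Qed.

Lemma set_state_set x k σ σ' : set_state (set_state x k σ) k σ' = set_state x k σ'.
Proof. by congr (_, _); apply/ffunP => j; rewrite !ffunE; case: eqP. Qed.

Lemma state_inj x y : (forall j, state x j = state y j) -> x = y.
Proof.
by case: x => i j; case: y => i' j' h; congr (_, _); apply/ffunP => l; case: (h l).
Qed.

End States.

Inductive attr_kind := Idle | Tie | Contrast | Invalid.

Definition nat_of_attr_kind (c : attr_kind) : nat :=
  match c with Idle => 0 | Tie => 1 | Contrast => 2 | Invalid => 3 end.
Definition attr_kind_of_nat (n : nat) : attr_kind :=
  match n with 0 => Idle | 1 => Tie | 2 => Contrast | _ => Invalid end.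
Lemma nat_of_attr_kindK : cancel nat_of_attr_kind attr_kind_of_nat.
Proof. by case. Qed.
HB.instance Definition _ := Countable.copy attr_kind (can_type nat_of_attr_kindK).
Lemma attr_kind_enumP : Finite.axiom [:: Idle; Tie; Contrast; Invalid].
Proof. by case. Qed.
HB.instance Definition _ := isFinite.Build attr_kind attr_kind_enumP.

Lemma big_attr_kind (R : nmodType) (F : attr_kind -> R) :
  \sum_(c : attr_kind) F c = F Idle + F Tie + F Contrast + F Invalid.
Proof. by rewrite /index_enum !unlock /= addr0 !addrA. Qed.

Definition active (c : attr_kind) : bool := (c == Tie) || (c == Contrast).

Section Kinds.
Variables (R : numFieldType) (v : nat).
Hypothesis hv : (2 <= v)%N.

Definition kind (σ : level_pair v) : attr_kind :=
  if σ.1 == ord0 then (if σ.2 == ord0 then Idle else Invalid)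
  else if σ.2 == ord0 then Invalid else if σ.1 == σ.2 then Tie else Contrast.

Definition kind_rep (c : attr_kind) : level_pair v :=
  match c with
  | Idle => (ord0, ord0)
  | Tie => (inord 1, inord 1)
  | Contrast => (inord 1, inord 2)
  | Invalid => (inord 1, ord0)
  end.

Lemma kind_repK c : kind (kind_rep c) = c.
Proof.
have h1 : (inord 1 : 'I_v.+1) != ord0 by rewrite -val_eqE /= inordK //; lia.
have h2 : (inord 2 : 'I_v.+1) != ord0 by rewrite -val_eqE /= inordK //; lia.
have h12 : (inord 1 : 'I_v.+1) != inord 2 by rewrite -val_eqE /= !inordK //; lia.
by case: c; rewrite /kind /= ?eqxx ?(negbTE h1) ?(negbTE h2) ?(negbTE h12).
Qed.

Lemma kind_Idle (i j : 'I_v.+1) : (kind (i, j) == Idle) = (i == ord0) && (j == ord0).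
Proof. by rewrite /kind /=; case: (i == ord0); case: (j == ord0) => //; case: (i == j). Qed.

Lemma kind_Tie (i j : 'I_v.+1) : (kind (i, j) == Tie) = (i != ord0) && (j == i).
Proof.
rewrite /kind /= [j == i]eq_sym; case: (eqVneq i ord0) => [ei|hi] /=.
  by case: (j == ord0).
case: (eqVneq j ord0) => [ej|hj] /=; last by case: (i == j).
by rewrite ej eq_sym (negbTE hi).
Qed.

Lemma kind_Contrast (i j : 'I_v.+1) :
  (kind (i, j) == Contrast) = [&& i != ord0, j != ord0 & j != i].
Proof.
rewrite /kind /= [j == i]eq_sym; case: (i == ord0); case: (j == ord0) => //=.
by case: (i == j).
Qed.

Lemma kind_valid (σ : level_pair v) : (kind σ != Invalid) = ((σ.1 == ord0) == (σ.2 == ord0)).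
Proof.
by rewrite /kind; case: (σ.1 == ord0); case: (σ.2 == ord0) => //; case: (σ.1 == σ.2).
Qed.

Lemma kind_active (σ : level_pair v) : active (kind σ) = (σ.1 != ord0) && (σ.2 != ord0).
Proof.
by rewrite /kind; case: (σ.1 == ord0); case: (σ.2 == ord0) => //; case: (σ.1 == σ.2).
Qed.

Lemma sum_nonzero_const (a : R) : \sum_(i : 'I_v.+1 | i != ord0) a = v%:R * a.
Proof. by rewrite sumr_const cardC1 card_ord mulr_natl. Qed.

Lemma sum_kindE (c : attr_kind) (F : level_pair v -> R) :
  \sum_(σ | kind σ == c) F σ = \sum_i \sum_j (if kind (i, j) == c then F (i, j) else 0).
Proof. by rewrite pair_big big_mkcond; apply: eq_bigr => -[i j]. Qed.

Lemma sum_kind_Idle (F : level_pair v -> R) :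
  \sum_(σ | kind σ == Idle) F σ = F (ord0, ord0).
Proof.
rewrite (eq_bigl (pred1 (ord0, ord0))) ?big_pred1_eq // => -[i j].
by rewrite kind_Idle /= -pair_eqE.
Qed.

Lemma sum_kind_Tie (F : level_pair v -> R) :
  \sum_(σ | kind σ == Tie) F σ = \sum_(i | i != ord0) F (i, i).
Proof.
rewrite sum_kindE [RHS]big_mkcond; apply: eq_bigr => i _.
rewrite (bigD1 i) //= big1 => [|j ji]; last by rewrite kind_Tie (negbTE ji) andbF.
by rewrite kind_Tie eqxx andbT addr0.
Qed.

Lemma sum_kind_Contrast (F : level_pair v -> R) :
  \sum_(σ | kind σ == Contrast) F σ =
  \sum_(i | i != ord0) \sum_(j | j != ord0) F (i, j) - \sum_(i | i != ord0) F (i, i).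
Proof.
rewrite sum_kindE -sumrB [RHS]big_mkcond; apply: eq_bigr => i _.
case: (eqVneq i ord0) => [->|i0] /=.
  by apply: big1 => j _; rewrite kind_Contrast.
rewrite [in RHS](bigD1 i) //= addrAC subrr add0r [RHS]big_mkcond; apply: eq_bigr => j _.
by rewrite kind_Contrast i0; case: (j != ord0); case: (j != i).
Qed.
End Kinds.
Arguments kind {v} σ.
Arguments kind_rep {v} c.

Section SumByKind.
Variables (R : numFieldType) (K v : nat).
Hypothesis hv : (2 <= v)%N.
Variables (P : pred (pair_prof K v)) (k : 'I_K).
Hypothesis P_kind : forall x σ σ',
  kind σ = kind σ' -> P (set_state x k σ) = P (set_state x k σ').
Variable H : pair_prof K v -> R.
Hypothesis H_k : forall x σ, H (set_state x k σ) = H x.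

(* Swapping the level pairs σ and σ' of attribute k is a bijection between the two ranges. *)
Lemma sum_state_kind σ σ' : kind σ = kind σ' ->
  \sum_(x | P x && (state x k == σ)) H x = \sum_(x | P x && (state x k == σ')) H x.
Proof.
move=> hσ; case: (eqVneq σ σ') => [<- //|ne].
pose swap x := if state x k == σ' then set_state x k σ
  else if state x k == σ then set_state x k σ' else x.
have swapK : involutive swap.
  move=> x; rewrite /swap; case: (eqVneq (state x k) σ') => e1.
    by rewrite state_set eqxx (negbTE ne) eqxx set_state_set -e1 set_state_id.
  case: (eqVneq (state x k) σ) => e2; last by rewrite (negbTE e1) (negbTE e2).
  by rewrite state_set !eqxx set_state_set -e2 set_state_id.
rewrite (reindex_inj (inv_inj swapK)); apply: eq_big => x.
  rewrite /swap; case: (eqVneq (state x k) σ') => e1.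
    by rewrite state_set !eqxx !andbT (@P_kind _ σ σ') // -e1 set_state_id.
  case: (eqVneq (state x k) σ) => e2; first by rewrite state_set eqxx eq_sym (negbTE ne) !andbF.
  by rewrite (negbTE e2) !andbF.
by move=> _; rewrite /swap; case: ifP => _; last case: ifP => _; rewrite ?H_k.
Qed.

Lemma sum_by_kind (G : level_pair v -> R) :
  \sum_(x | P x) G (state x k) * H x =
  \sum_(c : attr_kind)
     (\sum_(σ | kind σ == c) G σ) * \sum_(x | P x && (state x k == kind_rep c)) H x.
Proof.
rewrite (partition_big (fun x => state x k) predT) //=.
transitivity (\sum_σ G σ * \sum_(x | P x && (state x k == kind_rep (kind σ))) H x).
  apply: eq_bigr => σ _; rewrite (@sum_state_kind (kind_rep (kind σ)) σ) ?kind_repK //.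
  by rewrite mulr_sumr; apply: eq_bigr => x /andP[_ /eqP ->].
rewrite (partition_big kind predT) //=; apply: eq_bigr => c _; rewrite mulr_suml.
by apply: eq_bigr => σ /eqP ->.
Qed.
End SumByKind.

Section Region.
Variables (K v : nat).
Hypothesis hv : (2 <= v)%N.
Implicit Types (F : {set 'I_K}) (r : 'I_K -> level_pair v) (x : pair_prof K v).

(* With F = setT this is X^(S)_d (in_XSd_region); fixing the level pairs of the
   attributes outside F to r gives the smaller regions of the recursion. *)
Definition region F r (s e : nat) x : bool :=
  [&& [forall j, (j \notin F) ==> (state x j == r j)],
      [forall j, (j \in F) ==> (kind (state x j) != Invalid)],
      #|[set j in F | active (kind (state x j))]| == s &
      #|[set j in F | kind (state x j) == Contrast]| == e].

Lemma region_set_state F r s e k x σ σ' : k \in F -> kind σ = kind σ' ->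
  region F r s e (set_state x k σ) = region F r s e (set_state x k σ').
Proof.
move=> kF hσ; rewrite /region.
have hkind j : kind (state (set_state x k σ) j) = kind (state (set_state x k σ') j).
  by rewrite !state_set; case: (j == k).
have -> : [forall j, (j \notin F) ==> (state (set_state x k σ) j == r j)] =
          [forall j, (j \notin F) ==> (state (set_state x k σ') j == r j)].
  apply: eq_forallb => j; rewrite !state_set.
  by case: (eqVneq j k) => [->|]; rewrite ?kF.
have -> : [forall j, (j \in F) ==> (kind (state (set_state x k σ) j) != Invalid)] =
          [forall j, (j \in F) ==> (kind (state (set_state x k σ') j) != Invalid)].
  by apply: eq_forallb => j; rewrite hkind.
have -> : [set j in F | active (kind (state (set_state x k σ) j))] =
          [set j in F | active (kind (state (set_state x k σ') j))].
  by apply/setP => j; rewrite !inE hkind.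
have -> // : [set j in F | kind (state (set_state x k σ) j) == Contrast] =
             [set j in F | kind (state (set_state x k σ') j) == Contrast].
by apply/setP => j; rewrite !inE hkind.
Qed.

Lemma card_sepD1 F k (P : pred 'I_K) : k \in F ->
  #|[set j in F | P j]| = (P k + #|[set j in F :\ k | P j]|)%N.
Proof.
move=> kF; rewrite (cardsD1 k) inE kF; congr (_ + _)%N.
by apply: eq_card => j; rewrite !inE; case: (j == k).
Qed.

Lemma region_state F r s e k x c : k \in F -> c != Invalid ->
  region F r s e x && (state x k == kind_rep c) =
  [&& active c <= s, (c == Contrast) <= e &
      region (F :\ k) [eta r with k |-> kind_rep c] (s - active c) (e - (c == Contrast)) x]%N.
Proof.
move=> kF cI; rewrite /region (card_sepD1 (fun j => active (kind (state x j))) kF).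
rewrite (card_sepD1 (fun j => kind (state x j) == Contrast) kF).
apply/idP/idP.
- case/andP=> /and4P[/forallP out /forallP valid /eqP ns /eqP ne] /eqP xk.
  move: ns ne; rewrite /= xk kind_repK // => ns ne.
  apply/and3P; split; try lia.
  apply/and4P; split; try by apply/eqP; lia.
  + apply/forallP => j /=; rewrite !inE negb_and negbK.
    by case: eqP => [->|_] /=; [rewrite xk | exact: out].
  + apply/forallP => j; rewrite !inE; apply/implyP => /andP[_ jF].
    exact: (implyP (valid j) jF).
- case/and3P => cs ce /and4P[/forallP out /forallP valid /eqP ns /eqP ne].
  have xk : state x k = kind_rep c by have := out k; rewrite !inE eqxx /= eqxx => /eqP.
  rewrite xk eqxx andbT kind_repK //; apply/and4P; split; try by apply/eqP; lia.
  + apply/forallP => j; apply/implyP => jF.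
    have jk : j != k by apply: contraNneq jF => ->.
    by have := out j; rewrite !inE jk /= jF (negbTE jk).
  + apply/forallP => j; apply/implyP => jF; case: (eqVneq j k) => [->|jk].
      by rewrite xk kind_repK.
    by have := valid j; rewrite !inE jk jF.
Qed.

Lemma region_Invalid F r s e k x : k \in F ->
  region F r s e x && (state x k == kind_rep Invalid) = false.
Proof.
move=> kF; apply/negbTE/andP => -[/and4P[_ /forallP valid _ _] /eqP xk].
by have := valid k; rewrite kF xk kind_repK.
Qed.

End Region.

(* The size of region F r s e for #|F| = n: choose the active attributes and the
   contrasts among them, then one of v ties or v (v - 1) contrasts for each. *)
Definition npairs (v n s e : nat) : nat :=
  'C(n, s) * 'C(s, e) * v ^ (s - e) * (v * (v - 1)) ^ e.

Lemma npairs0 v s e : npairs v 0 s e = ((s == 0) && (e == 0))%N.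
Proof. by case: s => [|s]; case: e => [|e]; rewrite /npairs ?bin0n ?muln0 ?mul0n. Qed.

Lemma npairsS v n s e : npairs v n.+1 s e =
  (npairs v n s e + (if 0 < s then v * npairs v n s.-1 e else 0) +
   (if (0 < s) && (0 < e) then v * (v - 1) * npairs v n s.-1 e.-1 else 0))%N.
Proof.
rewrite /npairs; case: s => [|s] /=; first by rewrite !bin0 !addn0.
rewrite binS mulnDl !mulnDl -addnA; congr (_ + _)%N.
case: e => [|e] /=; first by rewrite !bin0 !subn0 addn0 expnS; ring.
rewrite binS subSS expnS.
case: (leqP e.+1 s) => hes.
  have -> : (s - e = (s - e.+1).+1)%N by lia.
  rewrite expnS; ring.
rewrite (bin_small hes) (_ : s - e.+1 = 0)%N; last by lia.
ring.
Qed.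

Lemma npairs_contrast_step v n s e :
  (n.+1 * (v * (v - 1)) * npairs v n s e = e.+1 * npairs v n.+1 s.+1 e.+1)%N.
Proof.
rewrite /npairs subSS expnS; have := mul_bin_diag n.+1 s; have := mul_bin_diag s.+1 e.
rewrite /= => he hs.
transitivity ((n.+1 * 'C(n, s)) * 'C(s, e) * v ^ (s - e) * (v * (v - 1) * (v * (v - 1)) ^ e))%N;
  first by ring.
rewrite hs.
transitivity
  ('C(n.+1, s.+1) * (s.+1 * 'C(s, e)) * v ^ (s - e) * (v * (v - 1) * (v * (v - 1)) ^ e))%N;
  first by ring.
by rewrite he; ring.
Qed.

Lemma npairs_tie_step v n s e :
  (n.+1 * v * npairs v n s e = (s.+1 - e) * npairs v n.+1 s.+1 e)%N.
Proof.
rewrite /npairs; have := mul_bin_diag n.+1 s; have := mul_bin_down s.+1 e.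
rewrite /= => he hs.
transitivity ((n.+1 * 'C(n, s)) * 'C(s, e) * (v * v ^ (s - e)) * (v * (v - 1)) ^ e)%N;
  first by ring.
rewrite hs; case: (leqP e s) => es.
  rewrite (_ : s.+1 - e = (s - e).+1)%N ?expnS; last by lia.
  transitivity ('C(n.+1, s.+1) * (s.+1 * 'C(s, e)) * (v * v ^ (s - e)) * (v * (v - 1)) ^ e)%N;
    first by ring.
  by rewrite he (_ : s.+1 - e = (s - e).+1)%N; [ring | lia].
rewrite (bin_small es); case: (eqVneq e s.+1) => [->|ne]; first by rewrite subnn !muln0 !mul0n.
by rewrite (bin_small (_ : s.+1 < e)%N) ?muln0 ?mul0n //; lia.
Qed.

Section RegionSums.
Variables (R : numFieldType) (K v : nat).
Hypothesis hv : (2 <= v)%N.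
Implicit Types (F : {set 'I_K}) (r : 'I_K -> level_pair v) (x : pair_prof K v).

Lemma sum_region_by_kind F r s e k (G : level_pair v -> R) (H : pair_prof K v -> R) :
  k \in F -> (forall x σ, H (set_state x k σ) = H x) ->
  \sum_(x | region F r s e x) G (state x k) * H x =
    (\sum_(σ | kind σ == Idle) G σ) *
      \sum_(x | region (F :\ k) [eta r with k |-> kind_rep Idle] s e x) H x
  + (\sum_(σ | kind σ == Tie) G σ) *
      (if (0 < s)%N then
         \sum_(x | region (F :\ k) [eta r with k |-> kind_rep Tie] s.-1 e x) H x
       else 0)
  + (\sum_(σ | kind σ == Contrast) G σ) *
      (if ((0 < s) && (0 < e))%N then
         \sum_(x | region (F :\ k) [eta r with k |-> kind_rep Contrast] s.-1 e.-1 x) H x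
       else 0).
Proof.
move=> kF H_k.
rewrite (sum_by_kind hv _ H_k); last by move=> x σ σ'; exact: region_set_state.
rewrite big_attr_kind.
have -> : \sum_(x | region F r s e x && (state x k == kind_rep Invalid)) H x = 0.
  by apply: big_pred0 => x; exact: region_Invalid.
rewrite mulr0 addr0.
have region_kind c : c != Invalid -> \sum_(x | region F r s e x && (state x k == kind_rep c)) H x =
    if ((active c <= s) && ((c == Contrast) <= e))%N then
      \sum_(x | region (F :\ k) [eta r with k |-> kind_rep c]
                  (s - active c) (e - (c == Contrast)) x) H x
    else 0.
  move=> cI; rewrite (eq_bigl _ _ (fun x => region_state hv r s e x kF cI)).
  case: ifP => [/andP[-> ->] //| h]; apply: big_pred0 => x.
  by case: (active c <= s)%N h => //=; case: ((c == Contrast) <= e)%N.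
rewrite !region_kind //= !subn0 subn1.
by case: (s) => [|s']; case: (e) => [|e']; rewrite /= ?subn1.
Qed.

Lemma region_set0 r s e x :
  region set0 r s e x = [&& [forall j, state x j == r j], s == 0%N & e == 0%N].
Proof.
have nil (P : pred 'I_K) : [set j in set0 | P j] = set0 by apply/setP => j; rewrite !inE.
rewrite /region !nil !cards0 ![0%N == _]eq_sym.
have -> : [forall j, (j \in set0) ==> (kind (state x j) != Invalid)].
  by apply/forallP => j; rewrite inE.
by congr (_ && _); apply: eq_forallb => j; rewrite inE.
Qed.

Lemma sum_states_eq r : \sum_(x | [forall j, state x j == r j]) 1 = 1 :> R.
Proof.
pose x0 : pair_prof K v := ([ffun j => (r j).1], [ffun j => (r j).2]).
rewrite (eq_bigl (pred1 x0)) ?big_pred1_eq // => x /=.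
apply/forallP/eqP => [h|->]; last by move=> j; rewrite /state !ffunE -surjective_pairing.
by apply: state_inj => j; rewrite (eqP (h j)) /state !ffunE -surjective_pairing.
Qed.

Lemma sum_region1 F r s e : \sum_(x | region F r s e x) 1 = (npairs v #|F| s e)%:R :> R.
Proof.
have [n hF] : exists n, #|F| = n by eexists.
rewrite hF; elim: n F r s e hF => [|n IHn] F r s e hF.
  move/cards0_eq: hF => ->; rewrite npairs0 (eq_bigl _ _ (region_set0 r s e)).
  case: (s == 0%N); case: (e == 0%N) => /=; try by rewrite big_pred0 // => x; rewrite !andbF.
  by rewrite (eq_bigl _ _ (fun x => andbT _)) sum_states_eq.
have [k kF] : exists k, k \in F by apply/card_gt0P; rewrite hF.
have hFk : #|F :\ k| = n by move: hF; rewrite (cardsD1 k) kF => -[].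
rewrite (eq_bigr (fun x => (fun=> 1) (state x k) * (fun=> 1) x)); last by move=> *; rewrite mulr1.
rewrite (sum_region_by_kind _ _ _ (fun=> 1) kF) // !IHn //.
rewrite sum_kind_Idle sum_kind_Tie sum_kind_Contrast !sum_nonzero_const.
rewrite npairsS !natrD; case: s => [|s]; case: e => [|e] /=;
  rewrite ?mulr0 ?addr0 ?addn0 ?mul1r ?mulr1 ?natrM //.
by rewrite natrB //; [ring | lia].
Qed.
End RegionSums.

Section WeightedSums.
Variables (R : numFieldType) (K v : nat).
Hypothesis hv : (2 <= v)%N.

(* For #|F| = n, the sum over region F r s e of a product, over r attributes of F,
   of weights 1 on ties, γ on contrasts and 0 on idle attributes (sum_region_prod). *)
Fixpoint weighted_npairs (γ : R) (r n s e : nat) : R :=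
  if r is r'.+1 then
    if s is s'.+1 then
      weighted_npairs γ r' n.-1 s' e +
      (if e is e'.+1 then γ * weighted_npairs γ r' n.-1 s' e' else 0)
    else 0
  else (npairs v n s e)%:R.

(* On the diagonal blocks the same-profile products give contrast weight v-1 and the
   cross products weight -1. *)
Definition diag_weight (r n s e : nat) : R :=
  weighted_npairs (v%:R - 1) r n s e - weighted_npairs (-1) r n s e.

Variables (T : eqType) (att : T -> 'I_K) (G : T -> level_pair v -> R) (m : T -> R) (γ : R).
Hypotheses (G_Idle : forall p, \sum_(σ | kind σ == Idle) G p σ = 0)
  (G_Tie : forall p, \sum_(σ | kind σ == Tie) G p σ = m p)
  (G_Contrast : forall p, \sum_(σ | kind σ == Contrast) G p σ = γ * m p).

Lemma prod_state_set (L : seq T) k x σ : k \notin map att L ->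
  \prod_(p <- L) G p (state (set_state x k σ) (att p)) = \prod_(p <- L) G p (state x (att p)).
Proof.
move=> kL; apply: eq_big_seq => p pL; rewrite state_set.
by case: eqP => // hk; case/negP: kL; rewrite -hk map_f.
Qed.

Lemma sum_region_prod (L : seq T) (F : {set 'I_K}) (r : 'I_K -> level_pair v) (s e : nat) :
  uniq (map att L) -> {subset map att L <= F} ->
  \sum_(x | region F r s e x) \prod_(p <- L) G p (state x (att p)) =
  (\prod_(p <- L) m p) * weighted_npairs γ (size L) #|F| s e.
Proof.
elim: L F r s e => [|p L IHL] F r s e /=.
  move=> _ _; rewrite big_nil mul1r -(sum_region1 R hv F r).
  by apply: eq_bigr => x _; rewrite big_nil.
case/andP=> pL uL LF; have kF : att p \in F by apply: LF; rewrite inE eqxx.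
have LFk : {subset map att L <= F :\ att p}.
  move=> j jL; rewrite !inE LF ?inE ?jL ?orbT // andbT.
  by apply: contraNneq pL => <-.
have cardFk : #|F :\ att p| = #|F|.-1 by rewrite (cardsD1 (att p) F) kF.
under eq_bigr do rewrite big_cons.
rewrite (sum_region_by_kind hv _ _ _ _ kF); last by move=> x σ; exact: prod_state_set.
rewrite G_Idle G_Tie G_Contrast mul0r add0r big_cons.
case: s => [|s]; first by rewrite !mulr0 addr0.
by rewrite /= !IHL // cardFk; case: e => [|e] /=; ring.
Qed.
End WeightedSums.
Arguments diag_weight {R} v r n s e.

Section Moments.
Variables (R : numFieldType) (v : nat).
Hypothesis hv : (2 <= v)%N.
Implicit Types (a b : 'I_v.-1) (u w : bool).

Definition gram a b : R := (a == b)%:R + 1.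

Lemma f1_0 a : f1 (ord0 : 'I_v.+1) a = 0 :> R.
Proof. by rewrite /f1 /=; case: eqP => [|_]; first lia. Qed.

Lemma sum_nonzero_levels (F : 'I_v.+1 -> R) :
  F ord0 = 0 -> \sum_(i | i != ord0) F i = \sum_i F i.
Proof. by move=> F0; rewrite [RHS](bigD1 ord0) //= F0 add0r. Qed.

Lemma sum_indicator n : (n <= v)%N -> \sum_(i : 'I_v.+1) ((i == n :> nat)%:R : R) = 1.
Proof.
move=> nv; rewrite (bigD1 (inord n)) //= inordK // eqxx big1 ?addr0 // => i.
by rewrite -val_eqE /= inordK //; case: eqP => // ->; rewrite eqxx.
Qed.

Lemma f1E (i : 'I_v.+1) a :
  f1 i a = - (i == v :> nat)%:R + (i == a.+1 :> nat)%:R :> R.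
Proof.
have av : (a.+1 < v)%N by have := ltn_ord a; lia.
rewrite /f1; case: eqP => [->|_]; last by rewrite oppr0 add0r; case: eqP.
by rewrite (_ : (v == a.+1) = false) ?addr0 //; apply/eqP; lia.
Qed.

Lemma sum_f1 a : \sum_(i | i != ord0) f1 i a = 0 :> R.
Proof.
have av : (a.+1 < v)%N by have := ltn_ord a; lia.
rewrite sum_nonzero_levels ?f1_0 //.
under eq_bigr do rewrite f1E.
by rewrite big_split /= sumrN !sum_indicator ?addNr //; lia.
Qed.

Lemma f1_mulE (i : 'I_v.+1) a b :
  f1 i a * f1 i b = (i == v :> nat)%:R + (a == b)%:R * (i == a.+1 :> nat)%:R :> R.
Proof.
have av : (a.+1 < v)%N by have := ltn_ord a; lia.
rewrite /f1; case: (eqVneq (i : nat) v) => [->|iv].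
  by rewrite (_ : (v == a.+1) = false) ?mulr0 ?addr0 ?mulrNN ?mulr1 //; apply/eqP; lia.
case: (eqVneq (i : nat) a.+1) => [->|_]; last by rewrite !mul0r mulr0 addr0.
by rewrite eqSS val_eqE mul1r add0r mulr1; case: (a == b).
Qed.

Lemma sum_f1_mul a b : \sum_(i | i != ord0) f1 i a * f1 i b = gram a b.
Proof.
have av : (a.+1 < v)%N by have := ltn_ord a; lia.
rewrite sum_nonzero_levels ?f1_0 ?mul0r //.
under eq_bigr do rewrite f1_mulE.
rewrite big_split /= -mulr_sumr !sum_indicator ?mulr1; try lia.
by rewrite addrC.
Qed.

Definition sel (u : bool) (σ : level_pair v) : 'I_v.+1 := if u then σ.2 else σ.1.

Lemma sum_kind_f1 u a c : c != Invalid ->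
  \sum_(σ | kind σ == c) f1 (sel u σ) a = 0 :> R.
Proof.
case: c => // _.
- by rewrite sum_kind_Idle; case: u; rewrite f1_0.
- by rewrite sum_kind_Tie; case: u; rewrite sum_f1.
rewrite sum_kind_Contrast; case: u => /=; rewrite sum_f1 subr0.
  by rewrite big1 // => i _; rewrite sum_f1.
under eq_bigr do rewrite sum_nonzero_const.
by rewrite -mulr_sumr sum_f1 mulr0.
Qed.

Lemma sum_kind_f1_mul u w a b :
  [/\ \sum_(σ | kind σ == Idle) f1 (sel u σ) a * f1 (sel w σ) b = 0 :> R,
      \sum_(σ | kind σ == Tie) f1 (sel u σ) a * f1 (sel w σ) b = gram a b &
      \sum_(σ | kind σ == Contrast) f1 (sel u σ) a * f1 (sel w σ) b =
        (if u == w then v%:R - 1 else -1) * gram a b].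
Proof.
split.
- by rewrite sum_kind_Idle; case: u; rewrite f1_0 mul0r.
- by rewrite sum_kind_Tie; case: u; case: w; rewrite sum_f1_mul.
rewrite sum_kind_Contrast; case: u; case: w => /=; rewrite sum_f1_mul.
- by rewrite sum_nonzero_const; ring.
- under eq_bigr do rewrite -mulr_suml sum_f1 mul0r.
  by rewrite big1 // sub0r mulN1r.
- under eq_bigr do rewrite -mulr_sumr sum_f1 mulr0.
  by rewrite big1 // sub0r mulN1r.
- under eq_bigr do rewrite sum_nonzero_const.
  by rewrite -mulr_sumr sum_f1_mul; ring.
Qed.

End Moments.
Arguments gram {R v} a b.

Lemma prod_Mm (R : numFieldType) v (T : Type) (L : seq T) (a b : T -> 'I_v.-1) :
  \prod_(p <- L) Mm (a p) (b p) = (2 / v.-1%:R) ^+ size L * \prod_(p <- L) gram (a p) (b p) :> R.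
Proof.
elim: L => [|p L IHL]; first by rewrite !big_nil mulr1.
by rewrite !big_cons IHL exprS /Mm /gram; ring.
Qed.

Section Coordinates.
Variables (K v : nat).

Definition coord_factors (c : fcoord K v) : seq ('I_K * 'I_v.-1) :=
  match c with
  | inl (inl (k, a)) => [:: (k, a)]
  | inl (inr (kl, a, b)) => [:: ((val kl).1, a); ((val kl).2, b)]
  | inr (klm, a, b, e) => [:: ((val klm).1.1, a); ((val klm).1.2, b); ((val klm).2, e)]
  end.

Definition coord_attrs (c : fcoord K v) : seq 'I_K := map fst (coord_factors c).

Lemma size_coord_factors c : (1 <= size (coord_factors c) <= 3)%N.
Proof. by case: c => [[[k a]|[[kl a] b]]|[[[klm a] b] e]]. Qed.

Lemma coord_attrs_sorted c : sorted (fun k l : 'I_K => (k < l)%N) (coord_attrs c).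
Proof.
case: c => [[[k a]|[[kl a] b]]|[[[klm a] b] e]] //=; first by rewrite (valP kl).
by case/andP: (valP klm) => -> ->.
Qed.

Lemma coord_attrs_uniq c : uniq (coord_attrs c).
Proof.
apply: sorted_uniq (coord_attrs_sorted c) => [k l m|k]; [exact: ltn_trans | exact: ltnn].
Qed.

Lemma coord_attrs_neq c c' : coord_attrs c != coord_attrs c' ->
  exists k, ((k \in coord_attrs c) && (k \notin coord_attrs c')) ||
            ((k \in coord_attrs c') && (k \notin coord_attrs c)).
Proof.
move=> neq; case: (boolP (all (mem (coord_attrs c')) (coord_attrs c))) => [sub|]; last first.
  by case/allPn => k kc kc'; exists k; rewrite kc kc'.
case: (boolP (all (mem (coord_attrs c)) (coord_attrs c'))) => [sub'|]; last first.
  by case/allPn => k kc' kc; exists k; rewrite kc kc' orbT.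
case/eqP: neq; apply: (irr_sorted_eq _ _ (coord_attrs_sorted c) (coord_attrs_sorted c')).
- by move=> k l m; exact: ltn_trans.
- by move=> k; exact: ltnn.
by move=> k; apply/idP/idP => [/(allP sub)|/(allP sub')].
Qed.
End Coordinates.

Section FvecSums.
Variables (R : numFieldType) (K v : nat).
Hypothesis hv : (2 <= v)%N.
Implicit Types (F : {set 'I_K}) (r : 'I_K -> level_pair v) (x : pair_prof K v).

Definition fdiff (c : fcoord K v) x : R := fvec x.1 c - fvec x.2 c.

Definition prod_f1 (u : bool) (L : seq ('I_K * 'I_v.-1)) x : R :=
  \prod_(p <- L) f1 (sel u (state x p.1)) p.2.

Lemma fdiffE c x :
  fdiff c x = prod_f1 false (coord_factors c) x - prod_f1 true (coord_factors c) x.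
Proof.
by case: c => [[[k a]|[[kl a] b]]|[[[klm a] b] e]];
  rewrite /fdiff /prod_f1 /= !big_cons !big_nil /= ?mulr1 ?mulrA.
Qed.

Lemma prod_f1_set_state u L k x σ : k \notin map fst L ->
  prod_f1 u L (set_state x k σ) = prod_f1 u L x.
Proof. exact: (prod_state_set (fun p σ => f1 (sel u σ) p.2)). Qed.

Lemma fdiff_set_state c k x σ : k \notin coord_attrs c ->
  fdiff c (set_state x k σ) = fdiff c x.
Proof. by move=> kc; rewrite !fdiffE !prod_f1_set_state. Qed.

Lemma sum_region_f1 F r s e k u a (H : pair_prof K v -> R) :
  k \in F -> (forall x σ, H (set_state x k σ) = H x) ->
  \sum_(x | region F r s e x) f1 (sel u (state x k)) a * H x = 0.
Proof.
move=> kF H_k; rewrite (sum_region_by_kind hv r s e (fun σ => f1 (sel u σ) a) kF) //.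
by rewrite !sum_kind_f1 // !mul0r !addr0.
Qed.

Lemma sum_region_fdiff_single F r s e c c' k : k \in F ->
  k \in coord_attrs c -> k \notin coord_attrs c' ->
  \sum_(x | region F r s e x) fdiff c x * fdiff c' x = 0.
Proof.
move=> kF /mapP[[k0 a] kac /= ek] kc'; subst k0.
set L := rem (k, a) (coord_factors c).
have kL : k \notin map fst L.
  have := coord_attrs_uniq c.
  by rewrite /coord_attrs (perm_uniq (perm_map fst (perm_to_rem kac))) /= => /andP[].
have split_k u x : prod_f1 u (coord_factors c) x = f1 (sel u (state x k)) a * prod_f1 u L x.
  by rewrite /prod_f1 (big_rem _ kac).
under eq_bigr do rewrite fdiffE !split_k mulrBl -!mulrA.
by rewrite sumrB !(sum_region_f1 _ _ _ _ _ kF) ?subr0 // => x σ;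
  rewrite prod_f1_set_state ?fdiff_set_state.
Qed.

Lemma sum_region_fdiff_neq r s e c c' :
  coord_attrs c != coord_attrs c' ->
  \sum_(x | region setT r s e x) fdiff c x * fdiff c' x = 0 :> R.
Proof.
case/coord_attrs_neq => k /orP[/andP[kc kc'] | /andP[kc' kc]].
  exact: (sum_region_fdiff_single r s e (in_setT k) kc kc').
under eq_bigr do rewrite mulrC.
exact: (sum_region_fdiff_single r s e (in_setT k) kc' kc).
Qed.
Lemma prod_f1_zip u w L1 L2 x : map fst L1 = map fst L2 ->
  prod_f1 u L1 x * prod_f1 w L2 x =
  \prod_(p <- zip L1 L2) (f1 (sel u (state x p.1.1)) p.1.2 * f1 (sel w (state x p.1.1)) p.2.2).
Proof.
rewrite /prod_f1; elim: L1 L2 => [|[k a] L1 IH] [|[l b] L2] //=; first by rewrite !big_nil mulr1.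
by case=> <- /IH eqL; rewrite !big_cons -eqL mulrACA.
Qed.

Lemma sum_region_diag F r s e L1 L2 : map fst L1 = map fst L2 ->
  uniq (map fst L1) -> {subset map fst L1 <= F} ->
  \sum_(x | region F r s e x)
     (prod_f1 false L1 x - prod_f1 true L1 x) * (prod_f1 false L2 x - prod_f1 true L2 x) =
  2 * \prod_(p <- zip L1 L2) gram p.1.2 p.2.2 * diag_weight v (size L1) #|F| s e.
Proof.
move=> eqL uL LF.
have attsE : map (fun p => p.1.1) (zip L1 L2) = map fst L1.
  rewrite (_ : map _ _ = map fst (unzip1 (zip L1 L2))); last by rewrite -map_comp.
  by rewrite unzip1_zip // -(size_map fst) eqL size_map.
have sizeE : size (zip L1 L2) = size L1 by rewrite size1_zip // -(size_map fst) eqL size_map.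
have moment u w : \sum_(x | region F r s e x) prod_f1 u L1 x * prod_f1 w L2 x =
    \prod_(p <- zip L1 L2) gram p.1.2 p.2.2 *
    weighted_npairs v (if u == w then v%:R - 1 else -1) (size L1) #|F| s e.
  rewrite (eq_bigr _ (fun x _ => prod_f1_zip u w x eqL)).
  rewrite (sum_region_prod (att := fun p => p.1.1)
    (G := fun p σ => f1 (sel u σ) p.1.2 * f1 (sel w σ) p.2.2) (m := fun p => gram p.1.2 p.2.2)
    (γ := if u == w then v%:R - 1 else -1) hv)
    ?attsE ?sizeE // => p; by case: (sum_kind_f1_mul R hv u w p.1.2 p.2.2).
under [X in X = _]eq_bigr do rewrite mulrBl !mulrBr.
by rewrite !sumrB !moment /= /diag_weight; ring.
Qed.
End FvecSums.
Arguments fdiff {R K v} c x.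
Arguments prod_f1 {R K v} u L x.

Section Ratios.
Variables (R : numFieldType) (v : nat).
Hypothesis hv : (2 <= v)%N.

Lemma npairs_neq0 n s e : (e <= s <= n)%N -> (npairs v n s e)%:R != 0 :> R.
Proof.
case/andP=> es sn; rewrite pnatr_eq0 /npairs !muln_eq0 !negb_or -!lt0n !bin_gt0 es sn /=.
have v0 : (0 < v)%N by lia.
have v1 : (0 < v - 1)%N by lia.
by rewrite !expn_gt0 muln_gt0 v0 v1.
Qed.

Lemma natr_v1 : (v - 1)%:R = v%:R - 1 :> R.
Proof. by rewrite natrB //; lia. Qed.

Lemma natr_pred_v : v.-1%:R = v%:R - 1 :> R.
Proof. by rewrite -subn1 natr_v1. Qed.

Lemma npairs_contrast n s e : (npairs v n s e)%:R =
  e.+1%:R / (n.+1%:R * (v%:R * (v%:R - 1))) * (npairs v n.+1 s.+1 e.+1)%:R :> R.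
Proof.
rewrite -natr_v1 -!natrM.
have D0 : (n.+1 * (v * (v - 1)))%:R != 0 :> R by rewrite pnatr_eq0 !muln_eq0; lia.
apply: (mulfI D0); rewrite -natrM npairs_contrast_step natrM.
by rewrite [RHS]mulrA [X in _ = X * _]mulrC divfK.
Qed.

Lemma npairs_tie n s e : (npairs v n s e)%:R =
  (s.+1%:R - e%:R) / (n.+1%:R * v%:R) * (npairs v n.+1 s.+1 e)%:R :> R.
Proof.
have [es|se] := leqP e s.+1; last first.
  by rewrite /npairs !(@bin_small s e, @bin_small s.+1 e) ?muln0 ?mul0n ?mulr0 //; lia.
rewrite -natrB // -natrM.
have D0 : (n.+1 * v)%:R != 0 :> R by rewrite pnatr_eq0 muln_eq0; lia.
apply: (mulfI D0); rewrite -natrM npairs_tie_step natrM.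
by rewrite [RHS]mulrA [X in _ = X * _]mulrC divfK.
Qed.

Ltac nonzero := repeat (apply/andP; split);
  rewrite ?subr_eq0 ?nat1r ?natr1 -?natrD ?pnatr_eq0 ?pnatr_eq1 ?eqr_nat //; lia.

Lemma diag_weight_h1 K S d : (1 <= S <= K)%N -> (d <= S)%N ->
  2 * diag_weight v 1 K S d / (npairs v K S d)%:R = h1 K v S d * (2 / v.-1%:R) :> R.
Proof.
case/andP=> S1 SK dS; have N0 : (npairs v K S d)%:R != 0 :> R by rewrite npairs_neq0 ?dS.
case: K S S1 SK dS N0 => [|K] [|S] //= S1 SK dS N0; rewrite /diag_weight /h1.
case: d dS N0 => [|d] dS N0 /=.
  by rewrite addr0 subrr mulr0 !mul0r.
rewrite (npairs_contrast K S d) natr_pred_v; move: (npairs v _ _ _) N0 => N N0.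
by field; rewrite N0; nonzero.
Qed.

Lemma diag_weight_h2 K S d : (2 <= S <= K)%N -> (d <= S)%N ->
  2 * diag_weight v 2 K S d / (npairs v K S d)%:R = h2 K v S d * (2 / v.-1%:R) ^+ 2 :> R.
Proof.
case/andP=> S2 SK dS; have N0 : (npairs v K S d)%:R != 0 :> R by rewrite npairs_neq0 ?dS.
case: K S S2 SK dS N0 => [|[|K]] [|[|S]] //= S2 SK dS N0; rewrite /diag_weight /h2 natr_pred_v.
case: d dS N0 => [|[|d]] dS N0 /=.
- by rewrite !addr0 subrr mulr0 !mul0r.
- rewrite (npairs_tie K S 0) (npairs_contrast K.+1 S.+1 0).
  by move: (npairs v _ _ _) N0 => N N0; rewrite -!natr1; field; rewrite N0; nonzero.
rewrite (npairs_contrast K S d) (npairs_tie K S d.+1) (npairs_contrast K.+1 S.+1 d.+1).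
by move: (npairs v _ _ _) N0 => N N0; rewrite -!natr1; field; rewrite N0; nonzero.
Qed.

Lemma diag_weight_h3 K S d : (3 <= S <= K)%N -> (d <= S)%N ->
  2 * diag_weight v 3 K S d / (npairs v K S d)%:R = h3 K v S d * (2 / v.-1%:R) ^+ 3 :> R.
Proof.
case/andP=> S3 SK dS; have N0 : (npairs v K S d)%:R != 0 :> R by rewrite npairs_neq0 ?dS.
case: K S S3 SK dS N0 => [|[|[|K]]] [|[|[|S]]] //= S3 SK dS N0.
rewrite /diag_weight /h3 /lambda natr_pred_v; case: d dS N0 => [|[|[|d]]] dS N0 /=.
- by rewrite !addr0 subrr mulr0 !mul0r.
- rewrite (npairs_tie K S 0) (npairs_tie K.+1 S.+1 0) (npairs_contrast K.+2 S.+2 0).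
  by move: (npairs v _ _ _) N0 => N N0; rewrite -!natr1; field; rewrite N0; nonzero.
- rewrite (npairs_tie K S 1) (npairs_tie K S 0) (npairs_tie K.+1 S.+1 1).
  rewrite (npairs_contrast K.+1 S.+1 0) (npairs_contrast K.+2 S.+2 1).
  by move: (npairs v _ _ _) N0 => N N0; rewrite -!natr1; field; rewrite N0; nonzero.
rewrite (npairs_tie K S d.+2) (npairs_tie K S d.+1) (npairs_contrast K S d).
rewrite (npairs_tie K.+1 S.+1 d.+2) (npairs_contrast K.+1 S.+1 d.+1).
rewrite (npairs_contrast K.+2 S.+2 d.+2).
by move: (npairs v _ _ _) N0 => N N0; rewrite -!natr1; field; rewrite N0; nonzero.
Qed.

Definition hcoef (K S d r : nat) : R :=
  match r with 1 => h1 K v S d | 2 => h2 K v S d | _ => h3 K v S d end.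

Lemma diag_weight_hcoef K S d r : (1 <= r <= 3)%N -> (r <= S <= K)%N -> (d <= S)%N ->
  2 * diag_weight v r K S d / (npairs v K S d)%:R = hcoef K S d r * (2 / v.-1%:R) ^+ r.
Proof.
case/andP; case: r => [|[|[|[|r]]]] // _ _ rSK dS.
- by rewrite diag_weight_h1.
- by rewrite diag_weight_h2.
- by rewrite diag_weight_h3.
Qed.
End Ratios.

Section Design.
Variables (R : numFieldType) (K v S d : nat).
Hypothesis hv : (2 <= v)%N.

Lemma in_XSd_region (r : 'I_K -> level_pair v) (x : pair_prof K v) :
  in_XSd S d x = region setT r S d x.
Proof.
rewrite /in_XSd /in_XS /region.
have -> : [forall j, (j \notin [set: 'I_K]) ==> (state x j == r j)].
  by apply/forallP => j; rewrite inE.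
rewrite /=; apply/idP/idP.
- case/andP => /existsP[A /andP[/eqP cardA /forallP inA]] /eqP cardD.
  have -> : [set j in [set: 'I_K] | active (kind (state x j))] = A.
    apply/setP => j; rewrite !inE kind_active /=; have := inA j.
    by case: (j \in A) => /andP[-> ->].
  have -> : [set j in [set: 'I_K] | kind (state x j) == Contrast] = [set k | x.1 k != x.2 k].
    apply/setP => j; rewrite !inE kind_Contrast; have := inA j.
    case: (j \in A) => /andP[h1 h2]; first by rewrite h1 h2 eq_sym.
    by rewrite (eqP h1) (eqP h2) eqxx.
  rewrite cardA cardD !eqxx !andbT.
  apply/forallP => j; rewrite inE kind_valid /=.
  have := inA j; case: (j \in A) => /andP[h1 h2]; first by rewrite (negbTE h1) (negbTE h2).
  by rewrite h1 h2.
case/and3P => /forallP valid /eqP cardA /eqP cardD; apply/andP; split.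
  apply/existsP; exists [set j in [set: 'I_K] | active (kind (state x j))]; rewrite cardA eqxx /=.
  apply/forallP => j; rewrite !inE kind_active /=; have := valid j; rewrite inE kind_valid /=.
  by case: (x.1 j == ord0); case: (x.2 j == ord0).
rewrite -cardD; apply/eqP/eq_card => j; rewrite !inE kind_Contrast /=.
have := valid j; rewrite inE kind_valid /=.
case: (eqVneq (x.1 j) ord0) => h1; case: (eqVneq (x.2 j) ord0) => h2 //=.
  by rewrite h1 h2 eqxx.
by rewrite eq_sym.
Qed.

Lemma infoM_xibar (r : 'I_K -> level_pair v) (c c' : fcoord K v) :
  infoM (xibar R K v S d) c c' =
  (npairs v K S d)%:R^-1 * \sum_(x | region setT r S d x) fdiff c x * fdiff c' x.
Proof.
have cardX : #|[pred y : pair_prof K v | in_XSd S d y]| = npairs v K S d.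
  apply/eqP; rewrite -(eqr_nat R) -[K in npairs v K](card_ord K) -cardsT -(sum_region1 R hv _ r).
  rewrite sumr_const; apply/eqP; congr (_ *+ _); apply: eq_card => x.
  by rewrite inE (in_XSd_region r).
rewrite /infoM /xibar cardX mulr_sumr [RHS]big_mkcond /=; apply: eq_bigr => x _.
by rewrite ffunE (in_XSd_region r); case: ifP => // _; rewrite mul0r.
Qed.

Lemma infoM_diag (c c' : fcoord K v) : coord_attrs c = coord_attrs c' ->
  infoM (xibar R K v S d) c c' =
  2 * diag_weight v (size (coord_factors c)) K S d / (npairs v K S d)%:R *
  \prod_(p <- zip (coord_factors c) (coord_factors c')) gram p.1.2 p.2.2.
Proof.
move=> eqA; rewrite (infoM_xibar (fun=> (ord0, ord0))).
under [X in _ * X = _]eq_bigr do rewrite !fdiffE.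
rewrite sum_region_diag ?coord_attrs_uniq ?cardsT ?card_ord // => [|k]; last by rewrite inE.
ring.
Qed.

End Design.

Lemma blockM_attrs_neq (R : numFieldType) K v S d (c c' : fcoord K v) :
  coord_attrs c != coord_attrs c' -> blockM S d c c' = 0 :> R.
Proof.
case: c c' => [[[k a]|[[kl a] b]]|[[[klm a] b] e]]
  [[[k' a']|[[kl' a'] b']]|[[[klm' a'] b'] e']] //=.
- by move=> neq; rewrite (_ : k == k' = false) ?mul0r ?mulr0 //; apply: contraNF neq => /eqP ->.
- by move=> neq; rewrite (_ : kl == kl' = false) ?mul0r ?mulr0 //; apply: contraNF neq => /eqP ->.
by move=> neq; rewrite (_ : klm == klm' = false) ?mul0r ?mulr0 //; apply: contraNF neq => /eqP ->.
Qed.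

Lemma blockM_diag (R : numFieldType) K v S d (c c' : fcoord K v) :
  coord_attrs c = coord_attrs c' ->
  blockM S d c c' = hcoef R v K S d (size (coord_factors c)) *
    \prod_(p <- zip (coord_factors c) (coord_factors c')) Mm p.1.2 p.2.2.
Proof.
case: c c' => [[[k a]|[[kl a] b]]|[[[klm a] b] e]]
  [[[k' a']|[[kl' a'] b']]|[[[klm' a'] b'] e']] //=.
- by case=> <-; rewrite eqxx !big_cons big_nil /=; ring.
- case=> e1 e2; have -> : kl' = kl.
    by apply/val_inj/injective_projections.
  by rewrite eqxx !big_cons big_nil /=; ring.
case=> e1 e2 e3; have -> : klm' = klm.
  by apply/val_inj/injective_projections => //; apply: injective_projections.
by rewrite eqxx !big_cons big_nil /=; ring.
Qed.

Theorem lemma1 (R : realFieldType) (v K S d : nat)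
  (hv : (2 <= v)%N) (hK : (3 <= K)%N) (hS3 : (3 <= S)%N) (hSK : (S <= K)%N)
  (hd : (d <= S)%N) :
  forall c c' : fcoord K v,
    infoM (xibar R K v S d) c c' = blockM S d c c'.
Proof.
move=> c c'; have [eqA|neqA] := eqVneq (coord_attrs c) (coord_attrs c'); last first.
  rewrite blockM_attrs_neq // (infoM_xibar R S d hv (fun=> (ord0, ord0))).
  by rewrite sum_region_fdiff_neq ?mulr0.
have sizeE : size (zip (coord_factors c) (coord_factors c')) = size (coord_factors c).
  by rewrite size1_zip // -!(size_map fst) -/(coord_attrs c) -/(coord_attrs c') eqA.
have r13 := size_coord_factors c.
rewrite (infoM_diag R S d hv eqA) diag_weight_hcoef //; last by lia.
by rewrite blockM_diag // prod_Mm sizeE mulrA.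
Qed.
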